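(* Let $A\in\mathrm{SL}(2,\mathbb Z)$ and let $W_0=V_0,V_1,\dots,V_m=AW_0$, $m=c(A)$, be the shortest path from $W_0$ to $AW_0$ in $\Gamma$. If $c(A)\le1$, then $A$ is a minimal matrix. If $c(A)>1$, then $A$ is a minimal matrix if and only if $V_{m-1}\ne AV_1$.
   Context: Admissible hexagons are the sets $\{\pm a,\pm b,\pm(a+b)\}\subset\mathbb Z^2$ with $(a,b)$ a basis of $\mathbb Z^2$ (corresponding to isotopy classes of $\theta$-curves in $T^2$). $\Gamma$ is the graph on admissible hexagons, two adjacent iff they share two opposite pairs of vertices $\pm\sigma,\pm\mu$ (a flip); it is a trivalent tree with graph distance $d$, acted on by $\mathrm{SL}(2,\mathbb Z)$. $W_0=\{\pm(1,0),\pm(0,1),\pm(1,-1)\}$ and $c(A)=d(W_0,AW_0)$. For the operator $\mathcal A$ on $\mathbb Z^2$ given by $A$, $c(\mathcal A)=\min_{B\in\mathrm{SL}(2,\mathbb Z)}c(B^{-1}AB)$; a matrix $A$ is minimal if $c(A)=c(\mathcal A)$, i.e. $c(A)\le c(B^{-1}AB)$ for all $B\in\mathrm{SL}(2,\mathbb Z)$. *)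

From HB Require Import structures.
From mathcomp Require Import all_boot all_order all_algebra.
From mathcomp Require Import finmap.
Set Implicit Arguments. Unset Strict Implicit. Unset Printing Implicit Defensive.
Import Order.TTheory GRing.Theory Num.Theory.
Local Open Scope ring_scope.


Definition vec := 'cV[int]_2.

Definition vec2 (x y : int) : vec := \col_i (if i == 0 then x else y).

Definition is_basis (a b : vec) : Prop :=
  (forall v : vec, exists x y : int, v = x *: a + y *: b) /\
  (forall x y : int, x *: a + y *: b = 0 -> x = 0 /\ y = 0).

Definition hexagon := {fset vec}.

Definition hex_list (a b : vec) : seq vec := [:: a; -a; b; -b; a + b; -(a + b)].

Definition hex (a b : vec) : hexagon := [fset x | x in hex_list a b]%fset.

Definition admissible (H : hexagon) : Prop :=
  exists a b : vec, is_basis a b /\ H = hex a b.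

Definition adjacent (H H' : hexagon) : Prop :=
  admissible H /\ admissible H' /\ H <> H' /\
  exists sigma mu : vec,
    mu <> sigma /\ mu <> - sigma /\
    sigma \in H /\ - sigma \in H /\ mu \in H /\ - mu \in H /\
    sigma \in H' /\ - sigma \in H' /\ mu \in H' /\ - mu \in H'.

(* A walk in Gamma starting at H: the sequence of the following vertices. *)
Definition walk (H : hexagon) (s : seq hexagon) : Prop :=
  admissible H /\
  forall i, (i < size s)%N -> adjacent (nth H (H :: s) i) (nth H (H :: s) i.+1).

Definition walk_between (H H' : hexagon) (s : seq hexagon) : Prop :=
  walk H s /\ last H s = H'.

Definition act (A : 'M[int]_2) (H : hexagon) : hexagon :=
  [fset A *m v | v in H]%fset.

Definition W0_list : seq vec :=
  [:: vec2 1 0; - vec2 1 0; vec2 0 1; - vec2 0 1; vec2 1 (-1); - vec2 1 (-1)].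

Definition W0 : hexagon := [fset x | x in W0_list]%fset.

Definition SL2 (A : 'M[int]_2) : Prop := \det A = 1.

Definition geodesic (H H' : hexagon) (s : seq hexagon) : Prop :=
  walk_between H H' s /\
  forall t, walk_between H H' t -> (size s <= size t)%N.

(* c(A) <= c(A') for the distances c(A) = d(W0, A W0), written out:
   every walk from W0 to A' W0 is at least as long as some walk from
   W0 to A W0. *)
Definition c_le (A A' : 'M[int]_2) : Prop :=
  forall t, walk_between W0 (act A' W0) t ->
    exists s, walk_between W0 (act A W0) s /\ (size s <= size t)%N.

Definition minimal (A : 'M[int]_2) : Prop :=
  forall B : 'M[int]_2, SL2 B -> c_le A (invmx B *m A *m B).

(* The height of a hexagon, the sum of x^2 + xy + y^2 over its six vertices,
   changes along every edge of Gamma; every hexagon has at most one lower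
   neighbour, and every hexagon other than W0 has one.  Hence a
   nonbacktracking walk only descends and then ascends, so closed
   nonbacktracking walks are trivial: Gamma is a tree, nonbacktracking walks
   are geodesics, and closed walks have even length.
   Since c(B^-1 A B) = d(X, A X) for X = B W0, A is minimal iff no vertex X
   is moved less than W0.  If V_(m-1) = A V_1, then V_1 is moved at most
   m - 2.  Otherwise the walks V, A V, A^2 V, ... concatenate without
   backtracking, so d(W0, A^n W0) = n m <= 2 d(W0, X) + n d(X, A X) for all n,
   whence d(X, A X) >= m.  For m = 1, all displacements are odd. *)

From mathcomp Require Import all_boot all_order all_algebra.
From mathcomp Require Import finmap.
From Stdlib Require Import ClassicalEpsilon.
From mathcomp Require Import zify ring.
Set Implicit Arguments. Unset Strict Implicit. Unset Printing Implicit Defensive.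
Import Order.TTheory GRing.Theory Num.Theory.
Local Open Scope ring_scope.

(** * Nonbacktracking walks in graphs with a height function *)

Section HeightedGraph.

Variables (T : eqType) (e : rel T) (h : T -> int).
Hypothesis e_sym : symmetric e.
Hypothesis h_edge : forall x y, e x y -> h x != h y.
Hypothesis lower_uniq :
  forall x y z, e x y -> e x z -> h y < h x -> h z < h x -> y = z.

Fixpoint nonbacktracking (s : seq T) : bool :=
  match s with
  | x :: ((_ :: z :: _) as s') => (x != z) && nonbacktracking s'
  | _ => true
  end.

Lemma nonbacktracking3 x y z s :
  nonbacktracking [:: x, y, z & s] = (x != z) && nonbacktracking [:: y, z & s].
Proof. by []. Qed.

Lemma nonbacktracking_behead x s :
  nonbacktracking (x :: s) -> nonbacktracking s.
Proof. by case: s => [|y [|z s]] //= /andP[]. Qed.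

Lemma nonbacktracking_catl s1 s2 :
  nonbacktracking (s1 ++ s2) -> nonbacktracking s1.
Proof. by elim: s1 => [|x [|y [|z s1]] IH] //= /andP[-> /IH]. Qed.

Lemma nonbacktracking_cat x s1 z w s2 :
  nonbacktracking (x :: rcons s1 z) -> nonbacktracking (z :: w :: s2) ->
  last x s1 != w -> nonbacktracking (x :: rcons s1 z ++ w :: s2).
Proof.
elim: s1 x => [|y s1 IH] x; first by move=> _ /= -> ->.
move=> nb1 nb2 /(IH y (nonbacktracking_behead nb1) nb2) {IH}.
by case: s1 nb1 => [|u s1] /= /andP[-> _] ->.
Qed.

Lemma edge_irr x : e x x = false.
Proof. by apply/negbTE/negP => /h_edge; rewrite eqxx. Qed.

Lemma h_edge_lt x y : e x y -> (h x < h y) || (h y < h x).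
Proof. by move/h_edge; rewrite neq_lt. Qed.

Lemma no_peak x y z : e x y -> e y z -> x != z -> h x < h y -> h y < h z.
Proof.
move=> exy eyz nxz lt_xy; have [//|lt_zy] := orP (h_edge_lt eyz).
have eyx : e y x by rewrite e_sym.
by rewrite (lower_uniq eyx eyz lt_xy lt_zy) eqxx in nxz.
Qed.

Lemma nonbacktracking_ascent x y s : path e x (y :: s) ->
  nonbacktracking (x :: y :: s) -> h x < h y -> h y <= h (last y s).
Proof.
elim: s x y => [|z s IH] x y //= /and3P[exy eyz ps] /andP[nxz nbs] lt_xy.
have lt_yz := no_peak exy eyz nxz lt_xy.
by apply: le_trans (ltW lt_yz) (IH y z _ nbs lt_yz); rewrite /= eyz.
Qed.

Lemma nonbacktracking_descent x y s : path e x (y :: s) ->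
  nonbacktracking (x :: y :: s) ->
  h (last y s) < h (last x (belast y s)) -> h y < h x /\ h (last y s) < h x.
Proof.
elim: s x y => [|z s IH] x y //= /and3P[exy eyz ps] /andP[nxz nbs] lt_last.
have pyz : path e y (z :: s) by rewrite /= eyz.
have [lt_zy lt_ly] := IH y z pyz nbs lt_last.
have lt_yx : h y < h x.
  have [lt_xy|//] := orP (h_edge_lt exy).
  by rewrite ltNge (ltW (no_peak exy eyz nxz lt_xy)) in lt_zy.
by split; last exact: lt_trans lt_ly lt_yx.
Qed.

(* A closed nonbacktracking walk first descends and finally ascends, so its
   second and penultimate vertices are lower neighbours of its base point,
   hence equal; the walk between them is a shorter closed one. *)
Lemma nonbacktracking_closed u s :
  path e u s -> nonbacktracking (u :: s) -> last u s = u -> s = [::].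
Proof.
move: {2}(size s) (leqnn (size s)) => n.
elim: n u s => [|n IH] u [|y s] // le_sn pus nbs last_u.
rewrite /= in le_sn pus last_u; case/andP: (pus) => euy ps.
have lt_yu : h y < h u.
  have [lt_uy|//] := orP (h_edge_lt euy).
  have := nonbacktracking_ascent pus nbs lt_uy.
  by rewrite last_u leNgt lt_uy.
case/lastP: s pus le_sn ps nbs last_u => [|mid w] _ le_sn ps nbs.
  by move=> /= eyu; rewrite eyu edge_irr in euy.
rewrite last_rcons => wu; subst w; move: ps; rewrite rcons_path => /andP[pm epu].
have lt_pu : h (last y mid) < h u.
  have [//|lt_up] := orP (h_edge_lt epu).
  have := @nonbacktracking_descent u y (rcons mid u).
  rewrite /= euy rcons_path pm epu last_rcons belast_rcons => /(_ isT nbs lt_up).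
  by rewrite ltxx => -[].
have ey : y = last y mid by apply: (lower_uniq euy _ lt_yu lt_pu); rewrite e_sym.
have nbm : nonbacktracking (y :: mid).
  by apply: (@nonbacktracking_catl _ [:: u]); rewrite cats1;
    exact: (nonbacktracking_behead nbs).
have mid0 : mid = [::].
  by apply: IH pm nbm (esym ey); move: le_sn; rewrite size_rcons ltnS; apply: ltnW.
by move: nbs; rewrite mid0 /= eqxx.
Qed.

Lemma nonbacktracking_shortest u p t :
  path e u p -> nonbacktracking (u :: p) -> path e u t ->
  last u p = last u t -> (size p <= size t)%N.
Proof.
elim: t u p => [|u1 t IH] u p pp nbp pt last_pt.
  by rewrite (nonbacktracking_closed pp nbp last_pt).
case: p pp nbp last_pt => [|p1 p] // pp nbp last_pt.
rewrite /= in pp pt last_pt |- *.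
case/andP: pp => eup1 pp; case/andP: pt => euu1 pt.
have [ep|ne] := eqVneq p1 u1.
  by subst p1; apply: IH pp (nonbacktracking_behead nbp) pt last_pt.
suff: (size (u :: p1 :: p) <= size t)%N by rewrite /=; lia.
apply: (IH u1 [:: u, p1 & p]) => //; first by rewrite /= e_sym euu1 eup1.
by rewrite /= eq_sym ne.
Qed.

Lemma walk_reduce u t : path e u t -> exists p,
  [/\ path e u p, nonbacktracking (u :: p), last u p = last u t &
      p = t \/ exists k, size t = (size p + k.+1.*2)%N].
Proof.
elim: t u => [|u1 t IH] u; first by exists [::]; split => //; left.
rewrite [path _ _ _]/= => /andP[euu1 /IH [[|x p] [pp nbp last_p red]]].
  exists [:: u1]; split; rewrite /= ?euu1 -?last_p //.
  by case: red => [<-|[k st]]; [left | right; exists k; rewrite /= st].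
have [xu|nxu] := eqVneq x u.
  subst x; move: pp; rewrite [path _ _ _]/= => /andP[_ pp].
  exists p; split => //; first exact: nonbacktracking_behead nbp.
  by right; case: red => [<-|[k st]]; [exists 0%N | exists k.+1];
    rewrite /= ?st /= -!mul2n; lia.
exists [:: u1, x & p]; split => //; first by rewrite [path _ _ _]/= euu1.
  by rewrite [nonbacktracking _]/= eq_sym nxu.
by case: red => [->|[k st]]; [left | right; exists k; rewrite /= st].
Qed.

Lemma closed_walk_even u t : path e u t -> last u t = u -> ~~ odd (size t).
Proof.
move=> pt last_t; have [p [pp nbp last_p red]] := walk_reduce pt.
have p0 := nonbacktracking_closed pp nbp (etrans last_p last_t).
by case: red => [<-|[k ->]]; rewrite p0 //= odd_double.
Qed.

Lemma shortest_nonbacktracking u t : path e u t ->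
  (forall q, path e u q -> last u q = last u t -> (size t <= size q)%N) ->
  nonbacktracking (u :: t).
Proof.
move=> pt t_min; have [p [pp nbp last_p red]] := walk_reduce pt.
case: red => [<- //|[k size_t]].
by have := t_min p pp last_p; rewrite size_t; lia.
Qed.

Lemma path_reverse x s :
  path e x s -> path e (last x s) (rev (belast x s)).
Proof. by rewrite rev_path; apply: sub_path => a b; rewrite e_sym. Qed.

Lemma last_reverse (x : T) s : last (last x s) (rev (belast x s)) = x.
Proof. by case: s => [|y s] //=; rewrite rev_cons last_rcons. Qed.

Lemma walk_parity x s t : path e x s -> path e x t -> last x s = last x t ->
  odd (size s) = odd (size t).
Proof.
move=> ps pt last_st.
set w := s ++ rev (belast x t).
have pw : path e x w by rewrite cat_path ps last_st path_reverse.
have last_w : last x w = x by rewrite last_cat last_st last_reverse.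
have := closed_walk_even pw last_w.
by rewrite size_cat size_rev size_belast oddD; case: odd; case: odd.
Qed.

Section Displacement.

Variable g : T -> T.
Hypothesis g_inj : injective g.
Hypothesis g_edge : {homo g : x y / e x y}.

Lemma nonbacktracking_map s : nonbacktracking (map g s) = nonbacktracking s.
Proof.
elim: s => [|x [|y [|z s]] IH] //.
by rewrite !map_cons !nonbacktracking3 -IH (inj_eq g_inj).
Qed.

Fixpoint iter_walk (s : seq T) (n : nat) : seq T :=
  if n is n'.+1 then s ++ map g (iter_walk s n') else [::].

Lemma iter_walkS s n : iter_walk s n.+1 = s ++ map g (iter_walk s n).
Proof. by []. Qed.

Lemma size_iter_walk s n : size (iter_walk s n) = (n * size s)%N.
Proof. by elim: n => //= n IH; rewrite size_cat size_map IH mulSn. Qed.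

Lemma iter_walk_path x s n : path e x s -> last x s = g x ->
  path e x (iter_walk s n) /\ last x (iter_walk s n) = iter n g x.
Proof.
move=> ps last_s; elim: n => [|n [IHp IHl]] //=.
by rewrite cat_path ps last_s (homo_path g_edge IHp) last_cat last_s last_map IHl.
Qed.

(* Writing the walk as [y :: rcons mid z] exposes its second vertex [y] and
   its penultimate vertex [last y mid]; at each junction [g^k x] the
   concatenation passes from [g^(k-1) (last y mid)] to [g^k y]. *)
Lemma iter_walk_nonbacktracking x y mid z n :
  last x (y :: rcons mid z) = g x -> nonbacktracking (x :: y :: rcons mid z) ->
  last y mid != g y -> nonbacktracking (x :: iter_walk (y :: rcons mid z) n).
Proof.
move=> last_s nbs turn; elim: n => [|[|n] IH] //; first by rewrite /= cats0.
rewrite iter_walkS; set L := iter_walk _ n.+1.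
have gL : map g L = g y :: map g (behead L) by [].
rewrite gL -rcons_cons.
apply: nonbacktracking_cat => //.
have -> : z = g x by rewrite -last_s /= last_rcons.
by rewrite -gL -map_cons nonbacktracking_map.
Qed.

Lemma displacement_parity x0 s r x q :
  path e x0 s -> last x0 s = g x0 -> path e x0 r -> last x0 r = x ->
  path e x q -> last x q = g x -> odd (size s) = odd (size q).
Proof.
move=> ps last_s pr last_r pq last_q.
have := @walk_parity x0 (s ++ map g r) (r ++ q).
rewrite !cat_path ps pr last_s (homo_path g_edge pr) last_r pq.
rewrite !last_cat last_s last_map last_r last_q => /(_ isT isT erefl).
by rewrite !size_cat size_map !oddD; case: odd; case: odd; case: odd.
Qed.

Lemma iter_edge n : {homo iter n g : x y / e x y}.
Proof. by elim: n => // n IH x y /IH /g_edge. Qed.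

(* Going from [x0] to [x], then [n] times around the displacement walk of [x],
   and back to [g^n x0] costs [2|r| + n|q|], which the nonbacktracking walk
   [iter_walk s n] of length [n|s|] cannot beat; take [n > 2|r|]. *)
Lemma displacement_lower_bound x0 s r x q :
  path e x0 s -> last x0 s = g x0 ->
  (forall n, nonbacktracking (x0 :: iter_walk s n)) ->
  path e x0 r -> last x0 r = x -> path e x q -> last x q = g x ->
  (size s <= size q)%N.
Proof.
move=> ps last_s nb_s pr last_r pq last_q.
move En : (size r).*2.+1 => n.
have [pS last_S] := iter_walk_path n ps last_s.
have [pQ last_Q] := iter_walk_path n pq last_q.
have pR : path e x (rev (belast x0 r)) by rewrite -last_r path_reverse.
set w := r ++ iter_walk q n ++ map (iter n g) (rev (belast x0 r)).
have pw : path e x0 w.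
  by rewrite !cat_path pr last_r pQ last_Q (homo_path (@iter_edge n) pR).
have last_w : last x0 (iter_walk s n) = last x0 w.
  by rewrite !last_cat last_r last_Q last_map -last_r last_reverse last_S.
have := nonbacktracking_shortest pS (nb_s n) pw last_w.
rewrite !size_cat size_map size_rev size_belast !size_iter_walk -En -mul2n.
by nia.
Qed.
End Displacement.
End HeightedGraph.

(** * Coordinates and unimodular pairs *)

Definition c0 (v : vec) : int := v 0 0.
Definition c1 (v : vec) : int := v 1 0.

Lemma vecP (u v : vec) : u = v <-> c0 u = c0 v /\ c1 u = c1 v.
Proof.
split=> [->//|[h0 h1]]; apply/matrixP=> i j; rewrite [j]ord1.
case: i => [[|[|//]] Hi].
- by have -> : Ordinal Hi = 0 by apply/val_inj.
- by have -> : Ordinal Hi = 1 by apply/val_inj.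
Qed.

Lemma eq_vecE (u v : vec) : (u == v) = (c0 u == c0 v) && (c1 u == c1 v).
Proof. by apply/eqP/andP => [->//|[/eqP h0 /eqP h1]]; apply/vecP. Qed.

Lemma c0D (u v : vec) : c0 (u + v) = c0 u + c0 v. Proof. by rewrite /c0 mxE. Qed.
Lemma c1D (u v : vec) : c1 (u + v) = c1 u + c1 v. Proof. by rewrite /c1 mxE. Qed.
Lemma c0N (u : vec) : c0 (- u) = - c0 u. Proof. by rewrite /c0 mxE. Qed.
Lemma c1N (u : vec) : c1 (- u) = - c1 u. Proof. by rewrite /c1 mxE. Qed.
Lemma c0Z x (u : vec) : c0 (x *: u) = x * c0 u. Proof. by rewrite /c0 mxE. Qed.
Lemma c1Z x (u : vec) : c1 (x *: u) = x * c1 u. Proof. by rewrite /c1 mxE. Qed.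
Lemma c00 : c0 0 = 0. Proof. by rewrite /c0 mxE. Qed.
Lemma c10 : c1 0 = 0. Proof. by rewrite /c1 mxE. Qed.
Lemma c0_vec2 x y : c0 (vec2 x y) = x. Proof. by rewrite /c0 mxE. Qed.
Lemma c1_vec2 x y : c1 (vec2 x y) = y. Proof. by rewrite /c1 mxE. Qed.

Lemma c0M (M : 'M[int]_2) (u : vec) : c0 (M *m u) = M 0 0 * c0 u + M 0 1 * c1 u.
Proof.
rewrite /c0 /c1 mxE !big_ord_recl big_ord0 addr0.
by have -> : lift ord0 ord0 = 1 :> 'I_2 by apply/val_inj.
Qed.

Lemma c1M (M : 'M[int]_2) (u : vec) : c1 (M *m u) = M 1 0 * c0 u + M 1 1 * c1 u.
Proof.
rewrite /c0 /c1 mxE !big_ord_recl big_ord0 addr0.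
by have -> : lift ord0 ord0 = 1 :> 'I_2 by apply/val_inj.
Qed.

Definition coordE :=
  (c0D, c1D, c0N, c1N, c0Z, c1Z, c00, c10, c0_vec2, c1_vec2, c0M, c1M).

Lemma det_mx22 (M : 'M[int]_2) : \det M = M 0 0 * M 1 1 - M 0 1 * M 1 0.
Proof.
rewrite (expand_det_row _ 0) !big_ord_recl big_ord0 /cofactor !det_mx11 !mxE /=.
have -> : lift 0 0 = 1 :> 'I_2 by apply/val_inj.
have -> : lift 1 0 = 0 :> 'I_2 by apply/val_inj.
by rewrite expr0 expr1 !mul1r addr0 mulN1r mulrN.
Qed.

Definition cross (a b : vec) : int := c0 a * c1 b - c1 a * c0 b.

Definition unimodular (a b : vec) : Prop := cross a b = 1 \/ cross a b = -1.

Lemma crossN a b : cross a (- b) = - cross a b.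
Proof. rewrite /cross !coordE; ring. Qed.

Lemma unimodularN a b : unimodular a b -> unimodular a (- b).
Proof. by rewrite /unimodular crossN; lia. Qed.

Lemma unimodular_neq a b : unimodular a b -> b != a /\ b != - a.
Proof.
by rewrite /unimodular /cross !eq_vecE !coordE => ?; split; apply/negP; nia.
Qed.

Lemma is_basisP a b : is_basis a b <-> unimodular a b.
Proof.
rewrite /unimodular /cross; split.
  case=> [span _].
  have [x1 [y1 /vecP]] := span (vec2 1 0).
  have [x2 [y2 /vecP]] := span (vec2 0 1).
  rewrite !coordE => -[e1 e2] [e3 e4].
  have : c0 a * c1 b - c1 a * c0 b \is a GRing.unit.
    by apply/unitrPr; exists (x1 * y2 - x2 * y1); nia.
  by rewrite qualifE => /orP[] /eqP; [left | right].
move=> det_ab; pose d := c0 a * c1 b - c1 a * c0 b.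
have dd : d * d = 1 by rewrite /d; case: det_ab => ->.
split=> [v | x y /vecP].
  exists (d * (c0 v * c1 b - c1 v * c0 b)), (d * (c0 a * c1 v - c1 a * c0 v)).
  apply/vecP; rewrite !coordE; split.
    by transitivity (d * d * c0 v); [rewrite dd mul1r | rewrite /d; ring].
  by transitivity (d * d * c1 v); [rewrite dd mul1r | rewrite /d; ring].
rewrite !coordE => -[e0 e1]; rewrite -/d.
have ex : x * d = 0.
  by transitivity ((x * c0 a + y * c0 b) * c1 b - (x * c1 a + y * c1 b) * c0 b);
    [rewrite /d; ring | rewrite e0 e1; ring].
have ey : y * d = 0.
  by transitivity ((x * c1 a + y * c1 b) * c0 a - (x * c0 a + y * c0 b) * c1 a);
    [rewrite /d; ring | rewrite e0 e1; ring].
by split; [move/(congr1 ( *%R^~ d)): ex | move/(congr1 ( *%R^~ d)): ey];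
  rewrite -mulrA dd mulr1 mul0r.
Qed.

(** * Hexagons and flips *)

Lemma mem_hex a b v : (v \in hex a b) = (v \in hex_list a b).
Proof. by rewrite /hex in_fset. Qed.

Lemma mem_hexE a b v : (v \in hex a b) =
  [|| (c0 v == c0 a) && (c1 v == c1 a), (c0 v == - c0 a) && (c1 v == - c1 a),
      (c0 v == c0 b) && (c1 v == c1 b), (c0 v == - c0 b) && (c1 v == - c1 b),
      (c0 v == c0 a + c0 b) && (c1 v == c1 a + c1 b) |
      (c0 v == - (c0 a + c0 b)) && (c1 v == - (c1 a + c1 b))].
Proof. by rewrite mem_hex !inE !eq_vecE !coordE. Qed.

Lemma mem_hexl a b : a \in hex a b. Proof. by rewrite mem_hexE; lia. Qed.
Lemma mem_hexr a b : b \in hex a b. Proof. by rewrite mem_hexE; lia. Qed.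
Lemma mem_hexD a b : a + b \in hex a b.
Proof. by rewrite mem_hexE !coordE; lia. Qed.
Lemma mem_hexN a b v : v \in hex a b -> - v \in hex a b.
Proof. by rewrite !mem_hexE !coordE; lia. Qed.

Ltac case_mem6 h :=
  move: h; rewrite !in_cons in_nil orbF =>
  /orP[/eqP->|/orP[/eqP->|/orP[/eqP->|/orP[/eqP->|/orP[/eqP->|/eqP->]]]]].

Lemma hex_sub a b c d : c \in hex a b -> d \in hex a b -> c + d \in hex a b ->
  {subset hex c d <= hex a b}.
Proof.
move=> hc hd hcd v; rewrite mem_hex /hex_list => hv.
by case_mem6 hv; try apply: mem_hexN.
Qed.

Lemma eq_hex a b c d : c \in hex a b -> d \in hex a b -> c + d \in hex a b ->
  a \in hex c d -> b \in hex c d -> a + b \in hex c d -> hex a b = hex c d.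
Proof. by move=> *; apply/fsetP => v; apply/idP/idP; apply: hex_sub. Qed.

Definition lincomb (a b : vec) (p : int * int) : vec := p.1 *: a + p.2 *: b.

Definition hex_coords : seq (int * int) :=
  [:: (1, 0); (-1, 0); (0, 1); (0, -1); (1, 1); (-1, -1)].

Definition padd (p q : int * int) : int * int := (p.1 + q.1, p.2 + q.2).
Definition popp (p : int * int) : int * int := (- p.1, - p.2).
Definition pcomb (p q r : int * int) : int * int :=
  (r.1 * p.1 + r.2 * q.1, r.1 * p.2 + r.2 * q.2).

Lemma lincombD a b p q : lincomb a b p + lincomb a b q = lincomb a b (padd p q).
Proof. by apply/vecP; rewrite !coordE /=; split; ring. Qed.

Lemma lincombN a b p : - lincomb a b p = lincomb a b (popp p).
Proof. by apply/vecP; rewrite !coordE /=; split; ring. Qed.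

Lemma lincomb_comp a b p q r :
  lincomb (lincomb a b p) (lincomb a b q) r = lincomb a b (pcomb p q r).
Proof. by apply/vecP; rewrite !coordE /=; split; ring. Qed.

Lemma lincomb10 a b : lincomb a b (1, 0) = a.
Proof. by apply/vecP; rewrite !coordE /=; split; ring. Qed.

Lemma lincomb01 a b : lincomb a b (0, 1) = b.
Proof. by apply/vecP; rewrite !coordE /=; split; ring. Qed.

Lemma lincomb11 a b : lincomb a b (1, 1) = a + b.
Proof. by apply/vecP; rewrite !coordE /=; split; ring. Qed.

Lemma lincomb_oppr a b p : lincomb a b p = lincomb a (- b) (p.1, - p.2).
Proof. by apply/vecP; rewrite !coordE /=; split; ring. Qed.

Lemma cross_lincomb a b p q :
  cross (lincomb a b p) (lincomb a b q) = (p.1 * q.2 - p.2 * q.1) * cross a b.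
Proof. by rewrite /cross !coordE; ring. Qed.

Lemma lincomb_inj a b : unimodular a b -> injective (lincomb a b).
Proof.
move=> /is_basisP [_ free] [p1 p2] [q1 q2] /vecP; rewrite !coordE /= => -[e0 e1].
have [] := free (p1 - q1) (p2 - q2); first by apply/vecP; rewrite !coordE; lia.
by move=> d1 d2; congr pair; lia.
Qed.

Lemma hex_list_lincomb a b : hex_list a b = map (lincomb a b) hex_coords.
Proof.
rewrite /hex_list /=; congr [:: _; _; _; _; _; _].
all: by apply/vecP; rewrite !coordE /=; split; ring.
Qed.

Lemma mem_hex_lincomb a b p : unimodular a b ->
  (lincomb a b p \in hex a b) = (p \in hex_coords).
Proof.
by move=> ab; rewrite mem_hex hex_list_lincomb mem_map //; apply: lincomb_inj.
Qed.

Lemma hex_lincombP a b v :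
  reflect (exists2 p, p \in hex_coords & v = lincomb a b p) (v \in hex a b).
Proof. by rewrite mem_hex hex_list_lincomb; apply: mapP. Qed.

Lemma hex_lincomb a b p q :
  [&& p \in hex_coords, q \in hex_coords, padd p q \in hex_coords,
      has (fun r => pcomb p q r == (1, 0)) hex_coords,
      has (fun r => pcomb p q r == (0, 1)) hex_coords &
      has (fun r => pcomb p q r == (1, 1)) hex_coords] ->
  hex a b = hex (lincomb a b p) (lincomb a b q).
Proof.
case/and5P=> hp hq hpq /hasP[r1 hr1 /eqP e1] /andP[/hasP[r2 hr2 /eqP e2]].
case/hasP=> r3 hr3 /eqP e3.
apply: eq_hex; rewrite ?lincombD.
- by apply/hex_lincombP; exists p.
- by apply/hex_lincombP; exists q.
- by apply/hex_lincombP; exists (padd p q).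
- by apply/hex_lincombP; exists r1; rewrite // lincomb_comp e1 lincomb10.
- by apply/hex_lincombP; exists r2; rewrite // lincomb_comp e2 lincomb01.
- by apply/hex_lincombP; exists r3; rewrite // lincomb_comp e3 lincomb11.
Qed.

Lemma hex_of_vertices a b s m : unimodular a b ->
  s \in hex a b -> m \in hex a b -> m != s -> m != - s ->
  unimodular s m /\ (hex a b = hex s m \/ hex a b = hex s (- m)).
Proof.
move=> ab /hex_lincombP[p hp ->] /hex_lincombP[q hq ->]; rewrite lincombN.
case_mem6 hp; case_mem6 hq; rewrite ?eqxx // => _ _.
all: rewrite /unimodular cross_lincomb lincombN.
all: split; [by case: ab => ->; first [by left | by right] | ].
all: first [by left; apply: hex_lincomb | by right; apply: hex_lincomb].
Qed.

Lemma adjacentE H H' : adjacent H H' <->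
  exists a b, [/\ unimodular a b, H = hex a b & H' = hex a (- b)].
Proof.
split.
  case=> [[a [b [/is_basisP ab ->]]] [[c [d [/is_basisP cd ->]]] [neq [s [m]]]]].
  case=> /eqP nms [/eqP nmNs [s_ab [_ [m_ab [_ [s_cd [_ [m_cd _]]]]]]]].
  have [sm e1] := hex_of_vertices ab s_ab m_ab nms nmNs.
  have [_ e2] := hex_of_vertices cd s_cd m_cd nms nmNs.
  case: e1 e2 => e1 [] e2; rewrite e1 e2 in neq *; try by [].
    by exists s, m.
  by exists s, (- m); rewrite opprK; split => //; apply: unimodularN.
case=> a [b [ab -> ->]].
have [nba nbNa] := unimodular_neq ab.
split; first by exists a, b; split => //; apply/is_basisP.
split; first by exists a, (- b); split => //; apply/is_basisP/unimodularN.
split.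
  move=> e; have := mem_hexD a b; rewrite e -lincomb11 lincomb_oppr.
  by rewrite mem_hex_lincomb //; apply: unimodularN.
exists a, b; split; first exact/eqP.
by split; [exact/eqP | rewrite !mem_hexE ?coordE; lia].
Qed.

Lemma mem_hex_flipD a b : unimodular a b -> a + b \notin hex a (- b).
Proof.
move=> ab; rewrite -lincomb11 lincomb_oppr mem_hex_lincomb //.
exact: unimodularN.
Qed.

(** * The height of a hexagon *)

Definition qform (v : vec) : int := c0 v * c0 v + c0 v * c1 v + c1 v * c1 v.

Definition qpolar (u v : vec) : int :=
  2 * c0 u * c0 v + c0 u * c1 v + c1 u * c0 v + 2 * c1 u * c1 v.

Definition height (H : hexagon) : int := \sum_(v <- H) qform v.

Lemma qformN v : qform (- v) = qform v. Proof. by rewrite /qform !coordE; ring. Qed.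

Lemma qformD u v : qform (u + v) = qform u + qform v + qpolar u v.
Proof. by rewrite /qform /qpolar !coordE; ring. Qed.

Lemma qformB u v : qform (u - v) = qform u + qform v - qpolar u v.
Proof. by rewrite /qform /qpolar !coordE; ring. Qed.

Lemma qform_ge0 v : 0 <= qform v. Proof. by rewrite /qform; nia. Qed.

Lemma height_ge0 H : 0 <= height H.
Proof. by apply: sumr_ge0 => v _; apply: qform_ge0. Qed.

Lemma qform_polar_cross u v :
  4 * (qform u * qform v) - qpolar u v ^+ 2 = 3 * cross u v ^+ 2.
Proof. by rewrite /qform /qpolar /cross; ring. Qed.

Lemma qpolar_lincomb a b p q : qpolar (lincomb a b p) (lincomb a b q) =
  p.1 * q.1 * (2 * qform a) + (p.1 * q.2 + p.2 * q.1) * qpolar a b +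
  p.2 * q.2 * (2 * qform b).
Proof. by rewrite /qpolar /qform !coordE; ring. Qed.

Lemma unimodular_qform_polar a b : unimodular a b ->
  4 * (qform a * qform b) - qpolar a b ^+ 2 = 3.
Proof. by rewrite qform_polar_cross; case=> ->. Qed.

Lemma unimodular_qform_gt0 a b : unimodular a b -> 0 < qform a /\ 0 < qform b.
Proof.
move/unimodular_qform_polar; have := qform_ge0 a; have := qform_ge0 b.
by rewrite expr2; split; nia.
Qed.

Lemma unimodular_qpolar_neq0 a b : unimodular a b -> qpolar a b != 0.
Proof.
by move/unimodular_qform_polar; apply: contraPneq => ->; rewrite expr2; lia.
Qed.

Lemma uniq_hex_list a b : unimodular a b -> uniq (hex_list a b).
Proof.
by move=> ab; rewrite hex_list_lincomb map_inj_uniq //; apply: lincomb_inj.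
Qed.

Lemma height_hex a b : unimodular a b ->
  height (hex a b) = 2 * (qform a + qform b + qform (a + b)).
Proof.
move=> ab; have perm_hex : perm_eq (hex a b) (hex_list a b).
  by apply: uniq_perm; [exact: fset_uniq | exact: uniq_hex_list | exact: mem_hex].
rewrite /height (perm_big _ perm_hex) /hex_list !big_cons big_nil /=.
by rewrite !qformN; ring.
Qed.

Lemma height_flip a b : unimodular a b ->
  height (hex a b) = height (hex a (- b)) + 4 * qpolar a b.
Proof.
move=> ab; rewrite height_hex // height_hex; last exact: unimodularN.
by rewrite qformD qformB qformN; ring.
Qed.

Lemma height_adjacent_neq H H' : adjacent H H' -> height H != height H'.
Proof.
case/adjacentE=> a [b [ab -> ->]]; rewrite (height_flip ab).
by have := unimodular_qpolar_neq0 ab; apply: contra => /eqP; lia.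
Qed.

Lemma adjacent_lower H H' : adjacent H H' -> height H' < height H ->
  exists a b, [/\ unimodular a b, H = hex a b, H' = hex a (- b) & 0 < qpolar a b].
Proof.
case/adjacentE=> a [b [ab -> ->]]; rewrite (height_flip ab) => lt_flip.
by exists a, b; split => //; lia.
Qed.

(* Both lower neighbours arise from pairs of vertices with positive polar
   form; in the basis (a, b) of the first one, the only such pairs are
   +-(a, b) and +-(b, a), which flip to the same hexagon. *)
Lemma lower_neighbour_uniq H H1 H2 : adjacent H H1 -> adjacent H H2 ->
  height H1 < height H -> height H2 < height H -> H1 = H2.
Proof.
move=> adj1 adj2 lt1 lt2.
have [a [b [ab eH -> Bab]]] := adjacent_lower adj1 lt1.
have [c [d [cd eH' -> Bcd]]] := adjacent_lower adj2 lt2.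
have c_ab : c \in hex a b by rewrite -eH eH' mem_hexl.
have d_ab : d \in hex a b by rewrite -eH eH' mem_hexr.
have cd_ab : c + d \in hex a b by rewrite -eH eH' mem_hexD.
have [Qa Qb] := unimodular_qform_gt0 ab.
case/hex_lincombP: c_ab cd_ab Bcd => p hp ->; case/hex_lincombP: d_ab => q hq ->.
rewrite lincombD mem_hex_lincomb // qpolar_lincomb lincombN !(lincomb_oppr a b).
case_mem6 hp; case_mem6 hq; rewrite /= => hpq Bpq.
all: try by [].
all: try by exfalso; lia.
all: by apply: hex_lincomb.
Qed.

Lemma reduced_form_disc3 (u v b : int) : 0 < u -> 0 < v -> 0 < b ->
  b < 2 * u -> b < 2 * v -> 4 * (u * v) - b ^+ 2 = 3 -> [/\ u = 1, v = 1 & b = 1].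
Proof.
rewrite expr2 => u_gt0 v_gt0 b_gt0 bu bv disc.
have : b * b <= (2 * u - 1) * (2 * v - 1) by nia.
have [-> ->] : u = 1 /\ v = 1 by nia.
by split => //; nia.
Qed.

Lemma qform_eq1 v : qform v = 1 -> v \in W0.
Proof.
rewrite /qform /W0 in_fset /W0_list !inE !eq_vecE !coordE => e.
have : -1 <= c0 v <= 1 /\ -1 <= c1 v <= 1 by nia.
by lia.
Qed.

Lemma W0_hex : W0 = hex (vec2 1 0) (vec2 0 (-1)).
Proof.
apply/fsetP=> v; rewrite /W0 in_fset mem_hexE /W0_list !inE !eq_vecE !coordE.
by apply/idP/idP; lia.
Qed.

Lemma unimodular_W0 : unimodular (vec2 1 0) (vec2 0 (-1)).
Proof. by right; rewrite /cross !coordE. Qed.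

Lemma admissible_W0 : admissible W0.
Proof.
exists (vec2 1 0), (vec2 0 (-1)); rewrite -W0_hex.
by split => //; apply/is_basisP/unimodular_W0.
Qed.

Lemma reduced_hex_W0 a b : unimodular a b -> qpolar a b < 0 ->
  - qpolar a b < 2 * qform a -> - qpolar a b < 2 * qform b -> hex a b = W0.
Proof.
move=> ab B_lt0 Ba Bb; have [Qa Qb] := unimodular_qform_gt0 ab.
have [Qa1 Qb1 B1] : [/\ qform a = 1, qform b = 1 & - qpolar a b = 1].
  by apply: reduced_form_disc3; rewrite ?sqrrN ?unimodular_qform_polar //; lia.
have [nba nbNa] := unimodular_neq ab.
have a_W0 : a \in hex (vec2 1 0) (vec2 0 (-1)) by rewrite -W0_hex qform_eq1.
have b_W0 : b \in hex (vec2 1 0) (vec2 0 (-1)) by rewrite -W0_hex qform_eq1.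
have [_ [<-|eW0]] := hex_of_vertices unimodular_W0 a_W0 b_W0 nba nbNa.
  by rewrite W0_hex.
have : a + b \in W0 by apply: qform_eq1; rewrite qformD; lia.
by rewrite W0_hex eW0 (negbTE (mem_hex_flipD ab)).
Qed.

Lemma flip_lowers a b : unimodular a b -> 0 < qpolar a b ->
  adjacent (hex a b) (hex a (- b)) /\ height (hex a (- b)) < height (hex a b).
Proof.
move=> ab B_gt0; split; first by apply/adjacentE; exists a, b.
by rewrite (height_flip ab); lia.
Qed.

(* Of the three ways of writing a hexagon as [hex a b] up to sign, either one
   has positive polar form, and the corresponding flip lowers the height, or
   all three are negative, which forces [a] and [b] to have norm 1, so that
   the hexagon is W0. *)
Lemma descent H : admissible H ->
  H = W0 \/ exists H', adjacent H H' /\ height H' < height H.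
Proof.
case=> a [b [/is_basisP ab ->]].
have lower_or_neg c d : unimodular c d -> hex a b = hex c d ->
    (exists H', adjacent (hex a b) H' /\ height H' < height (hex a b)) \/
    qpolar c d < 0.
  move=> cd ->; have := unimodular_qpolar_neq0 cd.
  rewrite neq_lt => /orP[|B_gt0]; first by right.
  by left; exists (hex c (- d)); apply: flip_lowers.
have [ab1 ab2] : unimodular a (- (a + b)) /\ unimodular b (- (a + b)).
  by move: ab; rewrite /unimodular /cross !coordE; lia.
have e1 : hex a b = hex a (- (a + b)).
  by apply: eq_hex; rewrite !mem_hexE ?coordE; lia.
have e2 : hex a b = hex b (- (a + b)).
  by apply: eq_hex; rewrite !mem_hexE ?coordE; lia.
have [|Bab] := lower_or_neg a b ab erefl; first by right.
have [|Ba] := lower_or_neg _ _ ab1 e1; first by right.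
have [|Bb] := lower_or_neg _ _ ab2 e2; first by right.
left; apply: reduced_hex_W0 => //;
  by move: Ba Bb; rewrite /qpolar /qform !coordE; lia.
Qed.

(** * The action of SL(2, Z) *)

Lemma act_hex (M : 'M[int]_2) a b : act M (hex a b) = hex (M *m a) (M *m b).
Proof.
apply/fsetP => v; apply/imfsetP/idP => [[w /= + ->]|].
  rewrite mem_hex /hex_list => hw.
  by case_mem6 hw; rewrite ?mulmxN ?mulmxDr mem_hexE ?coordE; lia.
rewrite mem_hex /hex_list => hv.
case_mem6 hv; [exists a | exists (- a) | exists b | exists (- b) |
  exists (a + b) | exists (- (a + b))].
all: by rewrite ?mulmxN ?mulmxDr //= ?mem_hexN ?mem_hexl ?mem_hexr ?mem_hexD.
Qed.

Lemma act_mul (M N : 'M[int]_2) H : act M (act N H) = act (M *m N) H.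
Proof.
apply/fsetP => v; apply/imfsetP/imfsetP.
  by case=> w /= /imfsetP[u /= hu ->] ->; exists u; rewrite ?mulmxA.
by case=> u /= hu ->; exists (N *m u); [apply/imfsetP; exists u | rewrite mulmxA].
Qed.

Lemma act1 H : act 1%:M H = H.
Proof.
apply/fsetP => v; apply/imfsetP/idP => [[w /= hw ->]|hv]; first by rewrite mul1mx.
by exists v; rewrite ?mul1mx.
Qed.

Lemma cross_mul (M : 'M[int]_2) a b : cross (M *m a) (M *m b) = \det M * cross a b.
Proof. by rewrite det_mx22 /cross !coordE; ring. Qed.

Lemma unimodular_mulmx M a b :
  SL2 M -> unimodular a b -> unimodular (M *m a) (M *m b).
Proof. by rewrite /SL2 /unimodular cross_mul => ->; rewrite !mul1r. Qed.

Lemma adjacent_act M H H' : SL2 M -> adjacent H H' -> adjacent (act M H) (act M H').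
Proof.
move=> SL2M /adjacentE[a [b [ab -> ->]]]; apply/adjacentE.
exists (M *m a), (M *m b); rewrite !act_hex mulmxN.
by split => //; apply: unimodular_mulmx.
Qed.

Lemma admissible_act M H : SL2 M -> admissible H -> admissible (act M H).
Proof.
move=> SL2M [a [b [/is_basisP ab ->]]]; exists (M *m a), (M *m b).
by rewrite act_hex; split => //; apply/is_basisP/unimodular_mulmx.
Qed.

Lemma SL2_unit M : SL2 M -> M \in unitmx.
Proof. by rewrite /SL2 unitmxE => ->; rewrite unitr1. Qed.

Lemma SL2_inv M : SL2 M -> SL2 (invmx M).
Proof. by move=> SL2M; rewrite /SL2 det_inv SL2M invr1. Qed.

Lemma act_invK M H : SL2 M -> act (invmx M) (act M H) = H.
Proof. by move=> /SL2_unit Mu; rewrite act_mul mulVmx ?act1. Qed.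

Lemma act_inj M : SL2 M -> injective (act M).
Proof. by move=> SL2M H H' e; rewrite -(act_invK H SL2M) e act_invK. Qed.

Lemma act_conj A B : SL2 B ->
  act B (act (invmx B *m A *m B) W0) = act A (act B W0).
Proof. by move=> /SL2_unit Bu; rewrite !act_mul !mulmxA mulmxV ?mul1mx. Qed.

Definition mx_of_cols (u v : vec) : 'M[int]_2 :=
  \matrix_(i, j) (if j == 0 then u i 0 else v i 0).

Lemma mx_of_cols_e1 u v : mx_of_cols u v *m vec2 1 0 = u.
Proof. by apply/vecP; rewrite !coordE /mx_of_cols /c0 /c1 !mxE /=; split; ring. Qed.

Lemma mx_of_cols_e2N u v : mx_of_cols u v *m vec2 0 (-1) = - v.
Proof. by apply/vecP; rewrite !coordE /mx_of_cols /c0 /c1 !mxE /=; split; ring. Qed.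

Lemma det_mx_of_cols u v : \det (mx_of_cols u v) = cross u v.
Proof. by rewrite det_mx22 /mx_of_cols /cross /c0 /c1 !mxE /=; ring. Qed.

Lemma act_transitive H : admissible H -> exists2 B, SL2 B & act B W0 = H.
Proof.
case=> a [b [/is_basisP [ab1|abN1] ->]]; rewrite W0_hex.
  exists (mx_of_cols b (- a)).
    by rewrite /SL2 det_mx_of_cols /cross !coordE -ab1 /cross; ring.
  rewrite act_hex mx_of_cols_e1 mx_of_cols_e2N opprK.
  by apply: eq_hex; rewrite !mem_hexE ?coordE; lia.
exists (mx_of_cols a (- b)); first by rewrite /SL2 det_mx_of_cols crossN abN1 opprK.
by rewrite act_hex mx_of_cols_e1 mx_of_cols_e2N opprK.
Qed.

(** * Walks in Gamma and minimality *)

Definition adjb (H H' : hexagon) : bool :=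
  if excluded_middle_informative (adjacent H H') then true else false.

Lemma adjbP H H' : reflect (adjacent H H') (adjb H H').
Proof. by rewrite /adjb; case: excluded_middle_informative => h; constructor. Qed.

Lemma adjacent_sym H H' : adjacent H H' -> adjacent H' H.
Proof.
case=> adm [adm' [neq [s [m [? [? [? [? [? [? [? [? [? ?]]]]]]]]]]]]].
by do 3!split => //; [move=> e; apply: neq | exists s, m].
Qed.

Lemma adjb_sym : symmetric adjb.
Proof. by move=> H H'; apply/adjbP/adjbP; apply: adjacent_sym. Qed.

Lemma height_adjb_neq H H' : adjb H H' -> height H != height H'.
Proof. by move/adjbP; apply: height_adjacent_neq. Qed.

Lemma lower_neighbour_uniq_adjb H H1 H2 : adjb H H1 -> adjb H H2 ->
  height H1 < height H -> height H2 < height H -> H1 = H2.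
Proof. by move=> /adjbP adj1 /adjbP adj2; apply: lower_neighbour_uniq. Qed.

Lemma adjb_act M : SL2 M -> {homo act M : H H' / adjb H H'}.
Proof. by move=> SL2M H H' /adjbP adj; apply/adjbP/adjacent_act. Qed.

Lemma walk_betweenP H H' s :
  walk_between H H' s <-> [/\ admissible H, path adjb H s & last H s = H'].
Proof.
split=> [[[adm steps] <-]|[adm ps <-]].
  by split => //; apply/(pathP H) => i lt_is; apply/adjbP/steps.
by do 2!split => //; move=> i lt_is; apply/adjbP; move/(pathP H): ps; apply.
Qed.

Lemma path_from_W0 H : admissible H -> exists s, path adjb W0 s /\ last W0 s = H.
Proof.
move=> admH; have [n] : exists n : nat, height H <= n%:Z.
  by exists `|height H|%N; rewrite gez0_abs ?height_ge0.
elim: n H admH => [|n IH] H admH le_hn; have [->|[H' [adj lt_h]]] := descent admH.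
- by exists [::].
- by have := height_ge0 H'; lia.
- by exists [::].
have admH' : admissible H' by case: adj => _ [].
have [|s [ps last_s]] := IH H' admH'.
  by move: le_hn lt_h; rewrite -addn1 PoszD; lia.
exists (rcons s H); rewrite rcons_path ps last_s last_rcons adjb_sym; split => //.
exact/adjbP.
Qed.

Lemma minimal_of_displacement A V : SL2 A ->
  path adjb W0 V -> last W0 V = act A W0 ->
  (forall X r q, path adjb W0 r -> last W0 r = X ->
     path adjb X q -> last X q = act A X -> (size V <= size q)%N) ->
  minimal A.
Proof.
move=> SL2A pV last_V displacement B SL2B t /walk_betweenP[_ pt last_t].
exists V; split; first by apply/walk_betweenP; split => //; apply: admissible_W0.
have [r [pr last_r]] := path_from_W0 (admissible_act SL2B admissible_W0).
rewrite -(size_map (act B) t); apply: displacement pr last_r _ _.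
  exact: homo_path (adjb_act SL2B) pt.
by rewrite last_map last_t act_conj.
Qed.

Lemma backtracking_shortcut A y mid z : SL2 A -> minimal A ->
  path adjb W0 (y :: rcons mid z) -> last y mid = act A y ->
  exists2 s, walk_between W0 (act A W0) s & (size s <= size mid)%N.
Proof.
move=> SL2A minA /= /andP[/adjbP adj]; rewrite rcons_path => /andP[pm _] turn.
have [B SL2B BW0] := act_transitive (proj1 (proj2 adj)).
have [|s [ws le_s]] := minA B SL2B (map (act (invmx B)) mid).
  apply/walk_betweenP; split; first exact: admissible_W0.
    by rewrite -(act_invK W0 SL2B) BW0; apply: homo_path pm; apply/adjb_act/SL2_inv.
  by rewrite -[X in last X _](act_invK W0 SL2B) BW0 last_map turn -BW0 !act_mul.
by exists s; rewrite // -(size_map (act (invmx B)) mid).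
Qed.

Lemma geodesic_shortest H H' V : geodesic H H' V ->
  [/\ path adjb H V, last H V = H' &
      forall q, path adjb H q -> last H q = H' -> (size V <= size q)%N].
Proof.
case=> /walk_betweenP[admH pV last_V] V_min; split => // q pq last_q.
by apply: V_min; apply/walk_betweenP.
Qed.

Lemma minimal_of_size_le1 A V : SL2 A ->
  path adjb W0 V -> last W0 V = act A W0 -> (size V <= 1)%N -> minimal A.
Proof.
move=> SL2A pV last_V V_le1.
apply: (minimal_of_displacement SL2A pV last_V) => X r q pr last_r pq last_q.
have := displacement_parity adjb_sym height_adjb_neq lower_neighbour_uniq_adjb
  (adjb_act SL2A) pV last_V pr last_r pq last_q.
by case: (size V) V_le1 => [|[|]] //; case: (q).
Qed.

Lemma minimal_of_no_turn A y mid z : SL2 A ->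
  path adjb W0 (y :: rcons mid z) -> last W0 (y :: rcons mid z) = act A W0 ->
  nonbacktracking (W0 :: y :: rcons mid z) -> last y mid != act A y ->
  minimal A.
Proof.
move=> SL2A pV last_V nbV no_turn.
apply: (minimal_of_displacement SL2A pV last_V) => X r q pr last_r pq last_q.
apply: (displacement_lower_bound adjb_sym height_adjb_neq lower_neighbour_uniq_adjb
  (adjb_act SL2A) pV last_V _ pr last_r pq last_q) => n.
by apply: (iter_walk_nonbacktracking (act_inj SL2A)).
Qed.

Lemma nth_penultimate (y : hexagon) mid z :
  nth W0 (W0 :: y :: rcons mid z) (size (y :: rcons mid z)).-1 = last y mid.
Proof.
have -> : (size (y :: rcons mid z)).-1 = (size (W0 :: y :: mid)).-1.
  by rewrite /= size_rcons.
by rewrite -2!rcons_cons nth_rcons ltnSn nth_last.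
Qed.

Theorem theorem7 (A : 'M[int]_2) (V : seq hexagon) :
  SL2 A ->
  geodesic W0 (act A W0) V ->
  let m := size V in
  let Vi := fun i => nth W0 (W0 :: V) i in
  ((m <= 1)%N -> minimal A) /\
  ((1 < m)%N -> (minimal A <-> Vi m.-1 <> act A (Vi 1%N))).
Proof.
move=> SL2A /geodesic_shortest[pV last_V V_short]; cbv zeta.
split; first exact: minimal_of_size_le1 SL2A pV last_V.
have nbV : nonbacktracking (W0 :: V).
  by apply: shortest_nonbacktracking pV _ => q pq; rewrite last_V; apply: V_short.
case: V pV last_V V_short nbV => [|y V] //; case/lastP: V => [|mid z] //.
move=> pV last_V V_short nbV _; rewrite nth_penultimate /=.
split=> [minA turn | /eqP no_turn].
  have [s /walk_betweenP[_ ps last_s] le_s] :=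
    backtracking_shortcut SL2A minA pV turn.
  by have := V_short s ps last_s; rewrite /= size_rcons; lia.
exact: minimal_of_no_turn SL2A pV last_V nbV no_turn.
Qed.
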